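(* For every program $p$, environment $\sigma$ and time instant $t\in\mathbb{R}_{\ge0}$: (1) $(p,\sigma,t)\Downarrow(\mathit{skip},\sigma')$ if and only if $(p,\sigma,t)\to^{\star}(\mathit{skip},\sigma',0)$; (2) $(p,\sigma,t)\Downarrow(\mathit{stop},\sigma')$ if and only if $(p,\sigma,t)\to^{\star}(\mathit{stop},\sigma',0)$.
   Context: Syntax. Fix variables $\mathcal{X}=\{x_1,\dots,x_n\}$. Linear terms $u::= r\mid r\cdot x\mid u_1+u_2$. Atomic programs $x:=u$ and $\bar x'=\bar u\ \mathtt{for}\ u$. Programs $p::= a\mid p;q\mid \mathtt{if}\ b\ \mathtt{then}\ p\ \mathtt{else}\ q\mid \mathtt{while}\ b\ \mathtt{do}\ p$, $b$ in the free Boolean algebra on atoms $u_1\le u_2$, $u_1\ge u_2$. Environments $\sigma\colon\mathcal{X}\to\mathbb{R}$; $u\sigma,b\sigma$ evaluation; $\sigma\triangledown[\bar v/\bar x]$ update; $\phi_\sigma$ solution of $\bar x'=\bar u$ with initial value $(\sigma(x_i))_i$. Time instants are in $\mathbb{R}_{\ge0}$. Small-step rules: $(x:=u,\sigma,t)\to(\mathit{skip},\sigma\triangledown[u\sigma/x],t)$; $(\bar x'=\bar u\ \mathtt{for}\ u,\sigma,t)\to(\mathit{stop},\sigma\triangledown[\phi_\sigma(t)/\bar x],0)$ if $t<u\sigma$; $\to(\mathit{skip},\sigma\triangledown[\phi_\sigma(u\sigma)/\bar x],t-u\sigma)$ if $t\ge u\sigma$; $(\mathtt{if}\ b\ \mathtt{then}\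 p\ \mathtt{else}\ q,\sigma,t)\to(p,\sigma,t)$ if $b\sigma=\top$, $\to(q,\sigma,t)$ if $b\sigma=\bot$; $(\mathtt{while}\ b\ \mathtt{do}\ p,\sigma,t)\to(p;\mathtt{while}\ b\ \mathtt{do}\ p,\sigma,t)$ if $b\sigma=\top$, $\to(\mathit{skip},\sigma,t)$ if $b\sigma=\bot$; from $(p,\sigma,t)\to(\mathit{stop},\sigma',t')$ infer $(p;q,\sigma,t)\to(\mathit{stop},\sigma',t')$; from $(p,\sigma,t)\to(\mathit{skip},\sigma',t')$ infer $(p;q,\sigma,t)\to(q,\sigma',t')$; from $(p,\sigma,t)\to(p',\sigma',t')$ with $p'\notin\{\mathit{skip},\mathit{stop}\}$ infer $(p;q,\sigma,t)\to(p';q,\sigma',t')$. $\to^{\star}$ is the transitive closure of $\to$. Big-step relation $\Downarrow$ (least relation closed under): if $t<u\sigma$ then $(\bar x'=\bar u\ \mathtt{for}\ u,\sigma,t)\Downarrow(\mathit{stop},\sigma\triangledown[\phi_\sigma(t)/\bar x])$; $(\bar x'=\bar u\ \mathtt{for}\ u,\sigma,u\sigma)\Downarrow(\mathit{skip},\sigma\triangledown[\phi_\sigma(u\sigma)/\bar x])$; $(x:=u,\sigma,0)\Downarrow(\mathit{skip},\sigma\triangledown[u\sigma/x])$; from $(p,\sigma,t)\Downarrow(\mathit{stop},\sigma')$ infer $(p;q,\sigma,t)\Downarrow(\mathit{stop},\sigma')$; from $(p,\sigma,t)\Downarrow(\mathit{skip},\sigma')$ and $(q,\sigma',t')\Downarrow(r,\sigma'')$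 infer $(p;q,\sigma,t+t')\Downarrow(r,\sigma'')$; if $b\sigma=\top$ and $(p,\sigma,t)\Downarrow(r,\sigma')$ then $(\mathtt{if}\ b\ \mathtt{then}\ p\ \mathtt{else}\ q,\sigma,t)\Downarrow(r,\sigma')$; if $b\sigma=\bot$ and $(q,\sigma,t)\Downarrow(r,\sigma')$ then the same conclusion; if $b\sigma=\top$ and $(p;\mathtt{while}\ b\ \mathtt{do}\ p,\sigma,t)\Downarrow(r,\sigma')$ then $(\mathtt{while}\ b\ \mathtt{do}\ p,\sigma,t)\Downarrow(r,\sigma')$; if $b\sigma=\bot$ then $(\mathtt{while}\ b\ \mathtt{do}\ p,\sigma,0)\Downarrow(\mathit{skip},\sigma)$. Here $r\in\{\mathit{skip},\mathit{stop}\}$. *)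

From Stdlib Require Import Reals List Relations ClassicalEpsilon.
From Stdlib Require Fin.
From Coquelicot Require Import Coquelicot.
Open Scope R_scope.

Definition var (n : nat) := Fin.t n.
Definition env (n : nat) := var n -> R.

Inductive term (n : nat) : Type :=
| TConst : R -> term n
| TScale : R -> var n -> term n
| TPlus  : term n -> term n -> term n.
Arguments TConst {n}. Arguments TScale {n}. Arguments TPlus {n}.

Fixpoint teval {n} (u : term n) (s : env n) : R :=
  match u with
  | TConst r => r
  | TScale r x => r * s x
  | TPlus u1 u2 => teval u1 s + teval u2 s
  end.

Inductive bexp (n : nat) : Type :=
| BTrue  : bexp n
| BFalse : bexp n
| BLe    : term n -> term n -> bexp n
| BGe    : term n -> term n -> bexp n
| BNot   : bexp n -> bexp n
| BAnd   : bexp n -> bexp n -> bexp n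
| BOr    : bexp n -> bexp n -> bexp n.
Arguments BTrue {n}. Arguments BFalse {n}. Arguments BLe {n}. Arguments BGe {n}.
Arguments BNot {n}. Arguments BAnd {n}. Arguments BOr {n}.

Fixpoint beval {n} (b : bexp n) (s : env n) : bool :=
  match b with
  | BTrue => true
  | BFalse => false
  | BLe u1 u2 => if Rle_dec (teval u1 s) (teval u2 s) then true else false
  | BGe u1 u2 => if Rle_dec (teval u2 s) (teval u1 s) then true else false
  | BNot b => negb (beval b s)
  | BAnd b1 b2 => andb (beval b1 s) (beval b2 s)
  | BOr b1 b2 => orb (beval b1 s) (beval b2 s)
  end.

(* Programs.  [PODE xs us d] is  xs' = us for d  (xs, us lists of equal length). *)
Inductive prog (n : nat) : Type :=
| PAssign : var n -> term n -> prog n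
| PODE    : list (var n) -> list (term n) -> term n -> prog n
| PSeq    : prog n -> prog n -> prog n
| PIf     : bexp n -> prog n -> prog n -> prog n
| PWhile  : bexp n -> prog n -> prog n.
Arguments PAssign {n}. Arguments PODE {n}. Arguments PSeq {n}.
Arguments PIf {n}. Arguments PWhile {n}.

Definition in_vars {n} (x : var n) (xs : list (var n)) : bool :=
  existsb (fun y => if Fin.eq_dec x y then true else false) xs.

Definition upd {n} (s : env n) (x : var n) (v : R) : env n :=
  fun y => if Fin.eq_dec y x then v else s y.

Definition is_solution {n} (xs : list (var n)) (us : list (term n)) (s : env n)
  (f : R -> env n) : Prop :=
  f 0 = s /\
  (forall t y, in_vars y xs = false -> f t y = s y) /\
  (forall x u, In (x, u) (combine xs us) ->
     forall t, is_derive (fun r => f r x) t (teval u (f t))).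

Definition phi {n} (xs : list (var n)) (us : list (term n)) (s : env n) : R -> env n :=
  epsilon (inhabits (fun _ => s)) (is_solution xs us s).

Definition upd_flow {n} (xs : list (var n)) (us : list (term n)) (s : env n) (t : R)
  : env n :=
  fun y => if in_vars y xs then phi xs us s t y else s y.

Inductive outcome := OSkip | OStop.

Inductive cprog (n : nat) : Type :=
| CProg : prog n -> cprog n
| CSkip : cprog n
| CStop : cprog n.
Arguments CProg {n}. Arguments CSkip {n}. Arguments CStop {n}.

Definition cprog_of_outcome {n} (r : outcome) : cprog n :=
  match r with OSkip => CSkip | OStop => CStop end.

(* Small-step relation; time instants are nonnegative, so the ODE rule
   finishing the evolution requires 0 <= u sigma (phi_sigma is only defined
   on R>=0). *)
Inductive step {n} : prog n -> env n -> R -> cprog n -> env n -> R -> Prop :=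
| st_assign : forall x u s t,
    step (PAssign x u) s t CSkip (upd s x (teval u s)) t
| st_ode_stop : forall xs us d s t,
    t < teval d s ->
    step (PODE xs us d) s t CStop (upd_flow xs us s t) 0
| st_ode_skip : forall xs us d s t,
    0 <= teval d s -> teval d s <= t ->
    step (PODE xs us d) s t CSkip (upd_flow xs us s (teval d s)) (t - teval d s)
| st_if_true : forall b p q s t,
    beval b s = true -> step (PIf b p q) s t (CProg p) s t
| st_if_false : forall b p q s t,
    beval b s = false -> step (PIf b p q) s t (CProg q) s t
| st_while_true : forall b p s t,
    beval b s = true -> step (PWhile b p) s t (CProg (PSeq p (PWhile b p))) s t
| st_while_false : forall b p s t,
    beval b s = false -> step (PWhile b p) s t CSkip s t
| st_seq_stop : forall p q s t s' t',
    step p s t CStop s' t' -> step (PSeq p q) s t CStop s' t'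
| st_seq_skip : forall p q s t s' t',
    step p s t CSkip s' t' -> step (PSeq p q) s t (CProg q) s' t'
| st_seq_prog : forall p p' q s t s' t',
    step p s t (CProg p') s' t' -> step (PSeq p q) s t (CProg (PSeq p' q)) s' t'.

Definition config (n : nat) : Type := (cprog n * env n * R)%type.

Definition cstep {n} : relation (config n) :=
  fun c c' => match c, c' with
              | (CProg p, s, t), (r, s', t') => step p s t r s' t'
              | _, _ => False
              end.

Definition steps {n} : relation (config n) := clos_trans (config n) cstep.

Inductive bigstep {n} : prog n -> env n -> R -> outcome -> env n -> Prop :=
| bs_ode_stop : forall xs us d s t,
    0 <= t -> t < teval d s ->
    bigstep (PODE xs us d) s t OStop (upd_flow xs us s t)
| bs_ode_skip : forall xs us d s,
    0 <= teval d s ->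
    bigstep (PODE xs us d) s (teval d s) OSkip (upd_flow xs us s (teval d s))
| bs_assign : forall x u s,
    bigstep (PAssign x u) s 0 OSkip (upd s x (teval u s))
| bs_seq_stop : forall p q s t s',
    bigstep p s t OStop s' -> bigstep (PSeq p q) s t OStop s'
| bs_seq_skip : forall p q s t t' s' s'' r,
    bigstep p s t OSkip s' -> bigstep q s' t' r s'' ->
    bigstep (PSeq p q) s (t + t') r s''
| bs_if_true : forall b p q s t r s',
    beval b s = true -> bigstep p s t r s' -> bigstep (PIf b p q) s t r s'
| bs_if_false : forall b p q s t r s',
    beval b s = false -> bigstep q s t r s' -> bigstep (PIf b p q) s t r s'
| bs_while_true : forall b p s t r s',
    beval b s = true -> bigstep (PSeq p (PWhile b p)) s t r s' ->
    bigstep (PWhile b p) s t r s'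
| bs_while_false : forall b p s,
    beval b s = false -> bigstep (PWhile b p) s 0 OSkip s.

(* Soundness: if (p, s, t) ->* c, then every big-step evaluation of c,
   shifted by the time already consumed, is a big-step evaluation of p; this
   invariant holds for single steps and composes along runs.
   Completeness: induction on the big-step derivation; a sequence p; q first
   runs p inside the context [_; q], and a skip outcome reached with time u
   is equally reached with time u + v, leaving v over. *)

From Stdlib Require Import Reals Relations Lra.
Open Scope R_scope.

Section Semantics.

Variable n : nat.
Implicit Types (p q : prog n) (s : env n) (c : config n).

Lemma bigstep_time_nonneg p s t r s' : bigstep p s t r s' -> 0 <= t.
Proof. induction 1; lra. Qed.

Definition residual p s t c : Prop :=
  match c with
  | (CProg p1, s1, t1) => 0 <= t1 <= t /\
      forall u r s', bigstep p1 s1 u r s' -> bigstep p s (u + (t - t1)) r s'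
  | (CSkip, s1, t1) => 0 <= t1 <= t /\ bigstep p s (t - t1) OSkip s1
  | (CStop, s1, t1) => t1 = 0 /\ bigstep p s t OStop s1
  end.

Lemma step_residual p s t (c1 : cprog n) s1 t1 :
  step p s t c1 s1 t1 -> 0 <= t -> residual p s t (c1, s1, t1).
Proof.
  induction 1; intro Ht; simpl.
  - split; [lra|]. replace (t - t) with 0 by lra. constructor.
  - split; [reflexivity|]. constructor; lra.
  - split; [lra|]. replace (t - (t - teval d s)) with (teval d s) by lra.
    constructor; lra.
  - split; [lra|]. intros u r s'. rewrite Rminus_diag, Rplus_0_r.
    now apply bs_if_true.
  - split; [lra|]. intros u r s'. rewrite Rminus_diag, Rplus_0_r.
    now apply bs_if_false.
  - split; [lra|]. intros u r s'. rewrite Rminus_diag, Rplus_0_r.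
    now apply bs_while_true.
  - split; [lra|]. rewrite Rminus_diag. now apply bs_while_false.
  - destruct (IHstep Ht) as [-> Hp]. split; [reflexivity|]. now constructor.
  - destruct (IHstep Ht) as [Ht' Hp]. split; [lra|]. intros u r s'' Hq.
    rewrite Rplus_comm. now apply bs_seq_skip with s'.
  - destruct (IHstep Ht) as [Ht' Hp]. split; [lra|]. intros u r s'' Hb.
    inversion Hb; subst.
    + apply bs_seq_stop, Hp; assumption.
    + replace (t0 + t'0 + (t - t')) with (t0 + (t - t') + t'0) by lra.
      apply bs_seq_skip with s'0; auto.
Qed.

Lemma residual_trans p s t p1 s1 t1 c :
  residual p s t (CProg p1, s1, t1) -> residual p1 s1 t1 c -> residual p s t c.
Proof.
  intros [Ht1 Hp1].
  destruct c as [[[p2| |] s2] t2]; simpl; intros [Ht2 Hp2]; split.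
  - lra.
  - intros u r s' Hb.
    replace (u + (t - t2)) with (u + (t1 - t2) + (t - t1)) by lra. auto.
  - lra.
  - replace (t - t2) with (t1 - t2 + (t - t1)) by lra. auto.
  - assumption.
  - replace t with (t1 + (t - t1)) by lra. auto.
Qed.

Lemma steps_residual p s t c :
  steps (CProg p, s, t) c -> 0 <= t -> residual p s t c.
Proof.
  intros Hsteps Ht. apply clos_trans_tn1_iff in Hsteps.
  induction Hsteps as [c Hstep | c1 c Hstep _ IH].
  - destruct c as [[c1 s1] t1]. exact (step_residual _ _ _ _ _ _ Hstep Ht).
  - destruct c1 as [[[p1| |] s1] t1]; try contradiction.
    destruct c as [[c2 s2] t2].
    apply residual_trans with p1 s1 t1; [exact IH|].
    apply step_residual; [exact Hstep | apply IH].
Qed.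

Definition seq_ctx q c : config n :=
  match c with
  | (CProg p, s, t) => (CProg (PSeq p q), s, t)
  | (CSkip, s, t) => (CProg q, s, t)
  | (CStop, s, t) => (CStop, s, t)
  end.

Lemma steps_seq_ctx q c c' : steps c c' -> steps (seq_ctx q c) (seq_ctx q c').
Proof.
  induction 1 as [c c' Hstep | c1 c2 c3 _ IH12 _ IH23].
  - apply t_step. destruct c as [[[p| |] s] t]; try contradiction.
    destruct c' as [[[p'| |] s'] t']; simpl; constructor; exact Hstep.
  - exact (t_trans _ _ _ _ _ IH12 IH23).
Qed.

(* Stop outcomes are not generalised over leftover time: with more time
   the ODE that stopped may finish instead. *)
Definition runs p s u r s' : Prop :=
  match r with
  | OSkip => forall v, 0 <= v -> steps (CProg p, s, u + v) (CSkip, s', v)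
  | OStop => steps (CProg p, s, u) (CStop, s', 0)
  end.

Lemma runs_silent_step p p1 s u r s' :
  (forall t, step p s t (CProg p1) s t) -> runs p1 s u r s' -> runs p s u r s'.
Proof.
  intros Hstep Hrun.
  destruct r; simpl in *; [intros v Hv|];
    (eapply t_trans with (y := (CProg p1, s, _)); [apply t_step, Hstep |]).
  - now apply Hrun.
  - exact Hrun.
Qed.

Lemma runs_seq_stop p q s t s' :
  runs p s t OStop s' -> runs (PSeq p q) s t OStop s'.
Proof. exact (steps_seq_ctx q _ _). Qed.

Lemma runs_seq_skip p q s t t' s' r s'' :
  0 <= t' -> runs p s t OSkip s' -> runs q s' t' r s'' ->
  runs (PSeq p q) s (t + t') r s''.
Proof.
  intros Ht' Hp Hq. destruct r; simpl in *.
  - intros v Hv. rewrite Rplus_assoc.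
    apply t_trans with (CProg q, s', t' + v); [|exact (Hq v Hv)].
    apply (steps_seq_ctx q (CProg p, s, _) (CSkip, s', _)), Hp. lra.
  - apply t_trans with (CProg q, s', t'); [|exact Hq].
    exact (steps_seq_ctx q (CProg p, s, _) (CSkip, s', _) (Hp t' Ht')).
Qed.

Lemma bigstep_runs p s u r s' : bigstep p s u r s' -> runs p s u r s'.
Proof.
  induction 1.
  - apply t_step. now constructor.
  - intros v Hv. apply t_step. simpl.
    replace v with (teval d s + v - teval d s) at 2 by lra.
    constructor; lra.
  - intros v Hv. apply t_step. rewrite Rplus_0_l. constructor.
  - now apply runs_seq_stop.
  - apply runs_seq_skip with s'; [eapply bigstep_time_nonneg; eassumption | |];
      assumption.
  - apply runs_silent_step with p; [intro; now apply st_if_true | assumption].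
  - apply runs_silent_step with q; [intro; now apply st_if_false | assumption].
  - apply runs_silent_step with (PSeq p (PWhile b p));
      [intro; now apply st_while_true | assumption].
  - intros v Hv. apply t_step. rewrite Rplus_0_l. now apply st_while_false.
Qed.

End Semantics.

Theorem theorem4 (n : nat) (p : prog n) (s : env n) (t : R) (ht : 0 <= t) :
  (forall s' : env n,
     bigstep p s t OSkip s' <-> steps (CProg p, s, t) (CSkip, s', 0)) /\
  (forall s' : env n,
     bigstep p s t OStop s' <-> steps (CProg p, s, t) (CStop, s', 0)).
Proof.
  split; intro s'; split; intro H.
  - rewrite <- (Rplus_0_r t). exact (bigstep_runs _ _ _ _ _ _ H 0 (Rle_refl 0)).
  - rewrite <- (Rminus_0_r t). exact (proj2 (steps_residual _ _ _ _ _ H ht)).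
  - exact (bigstep_runs _ _ _ _ _ _ H).
  - exact (proj2 (steps_residual _ _ _ _ _ H ht)).
Qed.
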